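(* Let $G$ be a set, $\kappa$ a regular cardinal, $L$ a normal modal logic with the finite model property, and $T\subseteq\mathrm{Fm}_\kappa(G)$ with $|T|<\kappa$. Then for every sequent $\Gamma\Rightarrow\Delta$ with $\Gamma,\Delta\subseteq \mathrm{Fm}_\kappa(G)$, $$(G,\kappa,L,T)\vdash\Gamma\Rightarrow\Delta\iff (G,\kappa,L,\emptyset)\vdash \Box^*T,\Gamma\Rightarrow\Delta,$$ where $\Box^*T=\{\Box^n\varphi\mid n\ge 0,\ \varphi\in T\}$.
   Context: Formulas: for a set $G$ and regular cardinal $\kappa$, $\mathrm{Fm}_\kappa(G)$ is the least set containing $G$ and closed under $\varphi\mapsto\neg\varphi$, $\varphi\mapsto\Box\varphi$, and $S\mapsto\bigwedge S$, $S\mapsto\bigvee S$ for sets $S$ of formulas with $|S|<\kappa$. A sequent is $\Gamma\Rightarrow\Delta$ with $\Gamma,\Delta$ sets of formulas; commas denote union. For a set $S$, $\neg S=\{\neg\varphi:\varphi\in S\}$, $\Box S=\{\Box\varphi:\varphi\in S\}$. The calculus $(G,\kappa,L,T)$ has rules: (Ax) $\varphi\Rightarrow\varphi$; (W) from $\Gamma\Rightarrow\Delta$ infer $\Gamma,\Gamma'\Rightarrow\Delta,\Delta'$; (Cut) from $\Gamma\Rightarrow\Delta,\varphi$ for every $\varphi\in S$ and $S,\Gamma'\Rightarrow\Delta'$ infer $\Gamma,\Gamma'\Rightarrow\Delta,\Delta'$; (L$\neg$) from $\Gamma\Rightarrow\Delta,S$ infer $\neg S,\Gamma\Rightarrow\Delta$;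 (R$\neg$) from $S,\Gamma\Rightarrow\Delta$ infer $\Gamma\Rightarrow\Delta,\neg S$; for a family $\mathscr S$ of sets of formulas each of size $<\kappa$: (L$\bigwedge$) from $\bigcup\mathscr S,\Gamma\Rightarrow\Delta$ infer $\{\bigwedge S: S\in\mathscr S\},\Gamma\Rightarrow\Delta$; (R$\bigwedge$) from $\Gamma\Rightarrow\Delta,\{c(S):S\in\mathscr S\}$ for every choice function $c$ on $\mathscr S$ infer $\Gamma\Rightarrow\Delta,\{\bigwedge S:S\in\mathscr S\}$; (L$\bigvee$) from $\{c(S):S\in\mathscr S\},\Gamma\Rightarrow\Delta$ for every choice function $c$ infer $\{\bigvee S:S\in\mathscr S\},\Gamma\Rightarrow\Delta$; (R$\bigvee$) from $\Gamma\Rightarrow\Delta,\bigcup\mathscr S$ infer $\Gamma\Rightarrow\Delta,\{\bigvee S:S\in\mathscr S\}$; (Nec) from $S\Rightarrow\varphi$ infer $\Box S\Rightarrow\Box\varphi$; (lf) for sets $S_n$ ($n\in\omega$) of size $<\kappa$: from $\{\Box^n\bigvee(I\cap S_n):n\in\omega\},\Gamma\Rightarrow\Delta$ for every finite $I\subseteq\bigcup_nS_n$ infer $\{\Box^n\bigvee S_n:n\in\omega\},\Gamma\Rightarrow\Delta$; (T,L) from $S,\Gamma\Rightarrow\Delta$ infer $\Gamma\Rightarrow\Delta$ for any $S\subseteq T\cup L_{(G,\kappa)}$, where $L_{(G,\kappa)}$ is the set of formulas obtained from theorems of $L$ by substituting formulas of $\mathrm{Fm}_\kappa(G)$ for propositional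 variables. Proofs are well-founded (possibly infinitely branching) trees of sequents built by these rules; $(G,\kappa,L,T)\vdash\Gamma\Rightarrow\Delta$ means there is a proof with end-sequent $\Gamma\Rightarrow\Delta$. *)

From Stdlib Require Import List.

Set Implicit Arguments.

Inductive form (V : Type) : Type :=
| Atom : V -> form V
| Neg  : form V -> form V
| Box  : form V -> form V
| BigAnd : forall I : Type, (I -> form V) -> form V
| BigOr  : forall I : Type, (I -> form V) -> form V.

Arguments Atom {V} _.
Arguments Neg {V} _.
Arguments Box {V} _.
Arguments BigAnd {V} _ _.
Arguments BigOr {V} _ _.

Definition boxn {V : Type} (n : nat) (phi : form V) : form V := Nat.iter n (@Box V) phi.

(* Cardinals.  A cardinal is given as (the cardinality of) a type K.   *)
Definition injective {A B : Type} (f : A -> B) : Prop := forall x y, f x = f y -> x = y.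

Definition card_lt (A K : Type) : Prop :=
  (exists f : A -> K, injective f) /\ ~ (exists g : K -> A, injective g).

Definition regular_cardinal (K : Type) : Prop :=
  (exists f : nat -> K, injective f) /\
  (forall (I : Type) (S : I -> Type),
      card_lt I K -> (forall i, card_lt (S i) K) -> card_lt {i : I & S i} K).

Inductive Fm (K : Type) {V : Type} : form V -> Prop :=
| Fm_atom : forall v, Fm K (Atom v)
| Fm_neg  : forall phi, Fm K phi -> Fm K (Neg phi)
| Fm_box  : forall phi, Fm K phi -> Fm K (Box phi)
| Fm_and  : forall (I : Type) (f : I -> form V),
    card_lt I K -> (forall i, Fm K (f i)) -> Fm K (BigAnd I f)
| Fm_or   : forall (I : Type) (f : I -> form V),
    card_lt I K -> (forall i, Fm K (f i)) -> Fm K (BigOr I f).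

Definition fset (V : Type) := form V -> Prop.
Definition Fmset (K : Type) {V : Type} (X : fset V) : Prop := forall phi, X phi -> Fm K phi.
Definition union {V : Type} (X Y : fset V) : fset V := fun phi => X phi \/ Y phi.
Definition single {V : Type} (phi : form V) : fset V := fun psi => psi = phi.
Definition emptyset {V : Type} : fset V := fun _ => False.
Definition negset {V : Type} (X : fset V) : fset V := fun psi => exists phi, X phi /\ psi = Neg phi.
Definition boxset {V : Type} (X : fset V) : fset V := fun psi => exists phi, X phi /\ psi = Box phi.
Definition imageset {V : Type} (c : form V -> form V) (X : fset V) : fset V :=
  fun psi => exists phi, X phi /\ psi = c phi.
Definition finite_set {V : Type} (X : fset V) : Prop :=
  exists l : list (form V), forall phi, X phi <-> In phi l.

Definition boxstar {V : Type} (T : fset V) : fset V :=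
  fun psi => exists n phi, T phi /\ psi = boxn n phi.

Definition is_conj {V : Type} (phi : form V) : Prop := exists I f, phi = @BigAnd V I f.
Definition is_disj {V : Type} (phi : form V) : Prop := exists I f, phi = @BigOr V I f.
Definition conjunct_of {V : Type} (psi phi : form V) : Prop :=
  exists I (f : I -> form V) i, phi = BigAnd I f /\ psi = f i.
Definition disjunct_of {V : Type} (psi phi : form V) : Prop :=
  exists I (f : I -> form V) i, phi = BigOr I f /\ psi = f i.

(* Modal logics.  The language of L: finitary formulas Fm_omega(nat)   *)
(* over countably many propositional variables.                        *)
Definition finitary (phi : form nat) : Prop := Fm nat phi.

Definition impl {V : Type} (phi psi : form V) : form V :=
  BigOr bool (fun b => if b then Neg phi else psi).

Fixpoint peval {V : Type} (v : form V -> bool) (phi : form V) : Prop :=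
  match phi with
  | Atom _ => v phi = true
  | Box _ => v phi = true
  | Neg psi => ~ peval v psi
  | BigAnd J f => forall i, peval v (f i)
  | BigOr J f => exists i, peval v (f i)
  end.

Definition tautology {V : Type} (phi : form V) : Prop := forall v, peval v phi.

Fixpoint subst {V W : Type} (s : V -> form W) (phi : form V) : form W :=
  match phi with
  | Atom p => s p
  | Neg psi => Neg (subst s psi)
  | Box psi => Box (subst s psi)
  | BigAnd J f => BigAnd J (fun i => subst s (f i))
  | BigOr J f => BigOr J (fun i => subst s (f i))
  end.

Definition axK : form nat :=
  impl (Box (impl (Atom 0) (Atom 1))) (impl (Box (Atom 0)) (Box (Atom 1))).

Definition normal_logic (L : fset nat) : Prop :=
  (forall phi, L phi -> finitary phi) /\
  (forall phi, finitary phi -> tautology phi -> L phi) /\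
  L axK /\
  (forall phi psi, L phi -> L (impl phi psi) -> L psi) /\
  (forall phi, L phi -> L (Box phi)) /\
  (forall (s : nat -> form nat) phi, (forall n, finitary (s n)) -> L phi -> L (subst s phi)).

Fixpoint sat {W V : Type} (R : W -> W -> Prop) (val : V -> W -> Prop) (w : W) (phi : form V)
  : Prop :=
  match phi with
  | Atom p => val p w
  | Neg psi => ~ sat R val w psi
  | Box psi => forall u, R w u -> sat R val u psi
  | BigAnd J f => forall i, sat R val w (f i)
  | BigOr J f => exists i, sat R val w (f i)
  end.

Definition finite_type (W : Type) : Prop := exists l : list W, forall w, In w l.

Definition fmp (L : fset nat) : Prop :=
  forall phi, finitary phi -> ~ L phi ->
    exists (W : Type) (R : W -> W -> Prop) (val : nat -> W -> Prop),
      finite_type W /\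
      (forall psi w, L psi -> sat R val w psi) /\
      (exists w, ~ sat R val w phi).

Definition L_inst (G K : Type) (L : fset nat) : fset G :=
  fun psi => exists (s : nat -> form G) phi,
    (forall n, Fm K (s n)) /\ L phi /\ psi = subst s phi.

Inductive prov (G K : Type) (L : fset nat) (T : fset G) : fset G -> fset G -> Prop :=
| r_Ax : forall phi, Fm K phi -> prov K L T (single phi) (single phi)
| r_W : forall Ga De Ga' De',
    Fmset K Ga' -> Fmset K De' ->
    prov K L T Ga De -> prov K L T (union Ga Ga') (union De De')
| r_Cut : forall (S Ga De Ga' De' : fset G),
    Fmset K S -> Fmset K Ga -> Fmset K De ->
    (forall phi, S phi -> prov K L T Ga (union De (single phi))) ->
    prov K L T (union S Ga') De' ->
    prov K L T (union Ga Ga') (union De De')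
| r_LNeg : forall S Ga De,
    prov K L T Ga (union De S) -> prov K L T (union (negset S) Ga) De
| r_RNeg : forall S Ga De,
    prov K L T (union S Ga) De -> prov K L T Ga (union De (negset S))
| r_LAnd : forall (A Ga De : fset G),
    Fmset K A -> (forall phi, A phi -> is_conj phi) ->
    prov K L T (union (fun psi => exists phi, A phi /\ conjunct_of psi phi) Ga) De ->
    prov K L T (union A Ga) De
| r_RAnd : forall (A Ga De : fset G),
    Fmset K A -> Fmset K Ga -> Fmset K De -> (forall phi, A phi -> is_conj phi) ->
    (forall c : form G -> form G, (forall phi, A phi -> conjunct_of (c phi) phi) ->
        prov K L T Ga (union De (imageset c A))) ->
    prov K L T Ga (union De A)
| r_LOr : forall (A Ga De : fset G),
    Fmset K A -> Fmset K Ga -> Fmset K De -> (forall phi, A phi -> is_disj phi) ->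
    (forall c : form G -> form G, (forall phi, A phi -> disjunct_of (c phi) phi) ->
        prov K L T (union (imageset c A) Ga) De) ->
    prov K L T (union A Ga) De
| r_ROr : forall (A Ga De : fset G),
    Fmset K A -> (forall phi, A phi -> is_disj phi) ->
    prov K L T Ga (union De (fun psi => exists phi, A phi /\ disjunct_of psi phi)) ->
    prov K L T Ga (union De A)
| r_Nec : forall (S : fset G) phi,
    prov K L T S (single phi) -> prov K L T (boxset S) (single (Box phi))
| r_lf : forall (J : nat -> Type) (f : forall n, J n -> form G) (Ga De : fset G),
    (forall n, card_lt (J n) K) -> (forall n j, Fm K (f n j)) ->
    Fmset K Ga -> Fmset K De ->
    (forall I : fset G, finite_set I -> (forall psi, I psi -> exists n j, psi = f n j) ->
        prov K L T
          (union (fun psi => exists n,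
                    psi = boxn n (BigOr {j : J n | I (f n j)} (fun j => f n (proj1_sig j))))
                 Ga) De) ->
    prov K L T (union (fun psi => exists n, psi = boxn n (BigOr (J n) (f n))) Ga) De
| r_TL : forall (S Ga De : fset G),
    (forall phi, S phi -> T phi \/ @L_inst G K L phi) ->
    prov K L T (union S Ga) De -> prov K L T Ga De.

(* Derivations in (G,kappa,L,T) translate into derivations in (G,kappa,L,0)
   carrying Box^*T in the antecedent: a use of an axiom phi of T becomes a use
   of the side formula phi = Box^0 phi, and Nec stays sound because Box^*T is
   closed under Box.  Conversely every Box^n phi with phi in T is derivable in
   (G,kappa,L,T) by n applications of Nec, so Box^*T can be cut away. *)

From Stdlib Require Import Classical FunctionalExtensionality PropExtensionality.

Lemma fset_ext {V : Type} (X Y : fset V) : (forall x, X x <-> Y x) -> X = Y.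
Proof.
  intro H; extensionality x; apply propositional_extensionality; auto.
Qed.

Lemma union_emptyset_r {V : Type} (X : fset V) : union X emptyset = X.
Proof. apply fset_ext; unfold union, emptyset; tauto. Qed.

Ltac fset_equiv := intro; unfold union, single, emptyset; tauto.

Section Provability.

Variables (G K : Type) (L : fset nat).

Lemma prov_equiv {T Ga De Ga' De' : fset G} :
  prov K L T Ga De ->
  (forall x, Ga x <-> Ga' x) -> (forall x, De x <-> De' x) -> prov K L T Ga' De'.
Proof.
  intros H HGa HDe.
  rewrite <- (fset_ext _ _ HGa), <- (fset_ext _ _ HDe); exact H.
Qed.

Lemma Fmset_union (X Y : fset G) : Fmset K X -> Fmset K Y -> Fmset K (union X Y).
Proof. intros HX HY phi [H | H]; auto. Qed.

Lemma Fmset_emptyset : Fmset K (@emptyset G).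
Proof. intros phi []. Qed.

Lemma Fm_boxn n (phi : form G) : Fm K phi -> Fm K (boxn n phi).
Proof. intro H; induction n; simpl; [exact H | constructor; exact IHn]. Qed.

Lemma Fmset_boxstar {T : fset G} : Fmset K T -> Fmset K (boxstar T).
Proof. intros HT psi [n [phi [Hphi ->]]]; apply Fm_boxn; auto. Qed.

Lemma prov_weakenl {T X Ga De : fset G} :
  Fmset K X -> prov K L T Ga De -> prov K L T (union X Ga) De.
Proof.
  intros HX H.
  apply (prov_equiv (Ga := union Ga X) (De := union De emptyset)); try fset_equiv.
  apply r_W; auto using Fmset_emptyset.
Qed.

Lemma prov_theory_mono (T T' Ga De : fset G) :
  (forall phi, T phi -> T' phi) -> prov K L T Ga De -> prov K L T' Ga De.
Proof.
  intros HTT' H; induction H.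
  - apply r_Ax; auto.
  - apply r_W; auto.
  - apply (r_Cut (S := S)); auto.
  - apply r_LNeg; auto.
  - apply r_RNeg; auto.
  - apply r_LAnd; auto.
  - apply r_RAnd; auto.
  - apply r_LOr; auto.
  - apply r_ROr; auto.
  - apply r_Nec; auto.
  - apply r_lf; auto.
  - apply (r_TL (S := S)); auto.
    intros phi Hphi; destruct (H phi Hphi); auto.
Qed.

Lemma prov_boxn_axiom (T : fset G) n phi :
  Fmset K T -> T phi -> prov K L T emptyset (single (boxn n phi)).
Proof.
  intros HT Hphi; induction n as [|n IHn].
  - apply (r_TL (S := single phi)); [intros x ->; auto |].
    apply (prov_equiv (r_Ax L T (HT phi Hphi))); fset_equiv.
  - apply (prov_equiv (r_Nec IHn)); [ | fset_equiv ].
    unfold boxset, emptyset; firstorder.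
Qed.

Lemma boxset_boxstar_union (T S : fset G) x :
  union (boxstar T) (boxset (union (boxstar T) S)) x <-> union (boxstar T) (boxset S) x.
Proof.
  unfold union, boxset, boxstar; split.
  - intros [H | [y [[[n [phi [Hphi ->]]] | Hy] ->]]]; auto.
    + left; exists (Datatypes.S n), phi; auto.
    + right; exists y; auto.
  - intros [H | [y [Hy ->]]]; auto.
    right; exists y; auto.
Qed.

Lemma prov_boxstar_antecedent (T T' Ga De : fset G) :
  Fmset K T -> prov K L (union T T') Ga De -> prov K L T' (union (boxstar T) Ga) De.
Proof.
  intros HT H.
  pose proof (Fmset_boxstar HT) as HB.
  induction H.
  - apply prov_weakenl; auto; apply r_Ax; auto.
  - apply (prov_equiv (Ga := union (union (boxstar T) Ga) Ga') (De := union De De'));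
      try fset_equiv.
    apply r_W; auto.
  - apply (prov_equiv (Ga := union (union (boxstar T) Ga) (union (boxstar T) Ga'))
                      (De := union De De')); try fset_equiv.
    apply (r_Cut (S := S)); auto using Fmset_union.
    apply (prov_equiv IHprov); fset_equiv.
  - apply (prov_equiv (r_LNeg IHprov)); fset_equiv.
  - apply r_RNeg, (prov_equiv IHprov); fset_equiv.
  - apply (prov_equiv (Ga := union A (union (boxstar T) Ga)) (De := De)); try fset_equiv.
    apply r_LAnd, (prov_equiv IHprov); auto; fset_equiv.
  - apply r_RAnd; auto using Fmset_union.
  - apply (prov_equiv (Ga := union A (union (boxstar T) Ga)) (De := De)); try fset_equiv.
    apply r_LOr; auto using Fmset_union.
    intros c Hc; apply (prov_equiv (H4 c Hc)); fset_equiv.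
  - apply r_ROr; auto.
  - apply r_Nec, (prov_weakenl HB) in IHprov.
    apply (prov_equiv IHprov); [ apply boxset_boxstar_union | fset_equiv ].
  - apply (prov_equiv
             (Ga := union (fun psi => exists n, psi = boxn n (BigOr (J n) (f n)))
                          (union (boxstar T) Ga)) (De := De)); try fset_equiv.
    apply r_lf; auto using Fmset_union.
    intros I HI HIf; apply (prov_equiv (H4 I HI HIf)); fset_equiv.
  - (* Side formulas from T become members of Box^*T; the others stay side formulas. *)
    apply (r_TL (S := fun phi => S phi /\ ~ T phi)).
    + intros phi [HS HnT]; destruct (H phi HS) as [[HT0 | HT'] | HL]; tauto.
    + apply (prov_equiv IHprov); [ | fset_equiv ].
      intro x; unfold union; split.
      * intros [Hx | [Hx | Hx]]; auto.
        destruct (classic (T x)); [ right; left; exists 0, x | left ]; auto.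
      * intros [[Hx _] | [Hx | Hx]]; auto.
Qed.

Lemma prov_cut_boxstar (T T' Ga De : fset G) :
  Fmset K T -> prov K L T' (union (boxstar T) Ga) De -> prov K L (union T T') Ga De.
Proof.
  intros HT H.
  apply (prov_equiv (Ga := union emptyset Ga) (De := union emptyset De)); try fset_equiv.
  apply (r_Cut (S := boxstar T)); auto using Fmset_boxstar, Fmset_emptyset.
  - intros psi [n [phi [Hphi ->]]].
    apply (prov_theory_mono T); [ unfold union; auto |].
    apply (prov_equiv (prov_boxn_axiom T n phi HT Hphi)); fset_equiv.
  - apply (prov_theory_mono T'); [ unfold union; auto | exact H ].
Qed.

End Provability.

Theorem theorem3p1 :
  forall (G K : Type) (L : fset nat) (T : fset G),
    regular_cardinal K ->
    normal_logic L -> fmp L ->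
    Fmset K T -> card_lt {phi : form G | T phi} K ->
    forall Ga De : fset G, Fmset K Ga -> Fmset K De ->
      (prov K L T Ga De <-> prov K L emptyset (union (boxstar T) Ga) De).
Proof.
  intros G K L T _ _ _ HT _ Ga De _ _.
  rewrite <- (union_emptyset_r T) at 1.
  split; [ apply prov_boxstar_antecedent | apply prov_cut_boxstar ]; exact HT.
Qed.
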